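(* Let $f \in L^2(0,L)$ and $\beta \in \mathbb{R}$. Let $u_0 \in V$ satisfy $a_0(u_0,v) = \int_0^L f v\,dx - \beta v(L)$ for all $v \in V$, and for $n = 1,2,\dots,m$ let $u_n \in V$ satisfy $$a_0(u_n,v) + \sum_{j=1}^{n} a_j(u_{n-j}, v) = 0 \quad \text{for all } v \in V.$$ Then for every $m \ge 1$, $$a_0(u_m, v) = (-1)^m a_m(u_0, v) \quad \text{for all } v \in V.$$
   Context: Let $L>0$ and let $\kappa:(0,L)\to\mathbb{R}$ be measurable with $0<\kappa_{\min}\le \kappa(x)\le \kappa_{\max}$ for a.e. $x$; set $\psi = \log \kappa \in L^\infty(0,L)$. $V = \{ v \in H^1(0,L) : v(0) = 0\}$. For integers $j \ge 0$ and $u,v \in V$, define $a_j(u,v) = \frac{1}{j!}\int_0^L \psi(x)^j\, u'(x)\, v'(x)\,dx$. *)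

From HB Require Import structures.
From mathcomp Require Import all_boot all_order all_algebra.
From mathcomp Require Import all_classical all_reals all_analysis.
Set Implicit Arguments. Unset Strict Implicit. Unset Printing Implicit Defensive.
Import Order.TTheory GRing.Theory Num.Theory.
Local Open Scope classical_set_scope.
Local Open Scope ring_scope.

Definition L2 (R : realType) (L : R) (g : R -> R) : Prop :=
  measurable_fun `]0, L[ g /\
  (@lebesgue_measure R).-integrable `]0, L[ (fun x => ((g x) ^+ 2)%:E).

(* [inV L u g] : u belongs to V = {v in H^1(0,L) : v(0) = 0}, with weak
   derivative g (an L^2(0,L) function); u is the (absolutely) continuous
   representative  u(x) = \int_0^x g  on [0,L]. *)
Definition inV (R : realType) (L : R) (u g : R -> R) : Prop :=
  L2 L g /\
  forall x : R, 0 <= x <= L -> u x = Rintegral (@lebesgue_measure R) `]0, x[ g.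

Definition psi (R : realType) (kappa : R -> R) : R -> R := fun x => ln (kappa x).

(* a_j(u,v) = 1/j! \int_0^L psi^j u' v', expressed through the weak
   derivatives du = u', dv = v'. *)
Definition aform (R : realType) (L : R) (kappa : R -> R) (j : nat)
  (du dv : R -> R) : R :=
  (j`!%:R)^-1 *
  Rintegral (@lebesgue_measure R) `]0, L[
    (fun x => psi kappa x ^+ j * du x * dv x).

From HB Require Import structures.
From mathcomp Require Import all_boot all_order all_algebra.
From mathcomp Require Import all_classical all_reals all_analysis.
From mathcomp Require Import ring lra measurable_realfun.
Set Implicit Arguments. Unset Strict Implicit. Unset Printing Implicit Defensive.
Import Order.TTheory GRing.Theory Num.Theory.
Local Open Scope classical_set_scope.
Local Open Scope ring_scope.

(* Write I_n(g, h) = \int_0^L psi^n g h, so that a_j(u, v) = I_j(u', v') / j!.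
   Testing the n-th equation with v = \int_0^x h, for h in L^2, gives
   I_0(u_n', h) = - \sum_(1 <= j <= n) I_j(u_(n-j)', h) / j!, and
   I_j(u_k', h) = I_0(u_k', psi^j h), where psi^j h is again in L^2 because psi
   is essentially bounded. Strong induction over all such h then yields
   I_0(u_n', h) = c_n I_n(u_0', h) with c_0 = 1 and
   \sum_(j <= n) c_(n-j) / j! = 0 for n > 0: the c_n = (-1)^n / n! are the
   Taylor coefficients of exp(-x), since exp(x) exp(-x) = 1. *)

Definition expN_coef (R : numFieldType) (k : nat) : R := (-1) ^+ k / k`!%:R.

Lemma sum_inv_fact_expN_coef (R : numFieldType) n : (0 < n)%N ->
  \sum_(0 <= j < n.+1) (j`!%:R)^-1 * expN_coef R (n - j) = 0.
Proof.
move=> n_gt0; have fact_neq0 k : k`!%:R != 0 :> R by rewrite pnatr_eq0 -lt0n fact_gt0.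
transitivity ((n`!%:R)^-1 * ((-1) + 1 : R) ^+ n); last first.
  by rewrite addNr expr0n; case: n n_gt0 => // n _; rewrite mulr0.
rewrite exprDn big_distrr big_mkord; apply: eq_bigr => -[j /=]; rewrite ltnS => le_jn _.
rewrite expr1n mulr1 -mulr_natr /expN_coef.
have := congr1 (fun k => k%:R : R) (bin_fact le_jn); rewrite !natrM => <-.
by field; rewrite !fact_neq0 pnatr_eq0 -lt0n bin_gt0 le_jn.
Qed.

Lemma sum1_inv_fact_expN_coef (R : numFieldType) n : (0 < n)%N ->
  \sum_(1 <= j < n.+1) (j`!%:R)^-1 * expN_coef R (n - j) = - expN_coef R n.
Proof.
move=> /(sum_inv_fact_expN_coef R) /eqP.
by rewrite big_ltn // subn0 fact0 invr1 mul1r addr_eq0 => /eqP ->; rewrite opprK.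
Qed.

Lemma L2_mul_bounded (R : realType) (L M : R) (g h : R -> R) :
  measurable_fun `]0, L[ g ->
  {ae (@lebesgue_measure R), forall x, x \in `]0, L[ -> `|g x| <= M} ->
  L2 L h -> L2 L (fun x => g x * h x).
Proof.
move=> mg g_bnd [mh h_int].
have mgh : measurable_fun `]0, L[ (fun x => g x * h x) by exact: measurable_funM.
split => //.
have /integrableP[_ Mh_fin] :
    (@lebesgue_measure R).-integrable `]0, L[ (fun x => (M ^+ 2 * h x ^+ 2)%:E).
  by apply: eq_integrable (integrableZl _ (M ^+ 2) h_int) => // x _; rewrite EFinM.
apply/integrableP; split.
  by apply/measurable_EFinP; exact: measurable_funX.
apply: le_lt_trans Mh_fin; apply: ae_ge0_le_integral => //.
- by apply/measurableT_comp => //; apply/measurable_EFinP; exact: measurable_funX.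
- apply/measurableT_comp => //; apply/measurable_EFinP.
  by apply: measurable_funM => //; exact: measurable_funX.
apply: (@filterS _ _ (ae_filter_ringOfSetsType lebesgue_measure) _ _ _ g_bnd).
move=> x gxM Dx; have {}gxM := gxM Dx.
rewrite !abse_EFin lee_fin !ger0_norm ?sqr_ge0 ?(mulr_ge0 (sqr_ge0 M)) ?sqr_ge0 //.
rewrite exprMn ler_wpM2r ?sqr_ge0 //.
by rewrite -real_normK ?num_real // lerXn2r ?nnegrE ?(le_trans _ gxM).
Qed.

Lemma inV_primitive (R : realType) (L : R) (h : R -> R) :
  L2 L h -> inV L (fun x => Rintegral (@lebesgue_measure R) `]0, x[ h) h.
Proof. by []. Qed.

Section psi_weighted_forms.
Variables (R : realType) (L : R) (kappa : R -> R).

Definition psiX_L2 (h : R -> R) : Prop :=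
  forall j, L2 L (fun x => psi kappa x ^+ j * h x).

Lemma psiX_L2_mul i h : psiX_L2 h -> psiX_L2 (fun x => psi kappa x ^+ i * h x).
Proof. by move=> h_psiX j; under eq_fun do rewrite mulrA -exprD; exact: h_psiX. Qed.

Lemma psi_ae_bounded (kmin kmax : R) :
  0 < kmin ->
  {ae (@lebesgue_measure R), forall x, x \in `]0, L[ -> kmin <= kappa x <= kmax} ->
  {ae (@lebesgue_measure R), forall x, x \in `]0, L[ ->
     `|psi kappa x| <= `|ln kmin| + `|ln kmax|}.
Proof.
move=> kmin_gt0; apply: (@filterS _ _ (ae_filter_ringOfSetsType lebesgue_measure)).
move=> x kappa_bnd /kappa_bnd /andP[kmin_le le_kmax].
have kappa_gt0 : 0 < kappa x by exact: lt_le_trans kmin_le.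
have : ln kmin <= psi kappa x by rewrite ler_ln ?posrE.
have : psi kappa x <= ln kmax by rewrite ler_ln ?posrE ?(lt_le_trans kappa_gt0).
have := ler_norm (- ln kmin); rewrite normrN; have := normr_ge0 (ln kmin).
have := ler_norm (ln kmax); have := normr_ge0 (ln kmax).
by rewrite ler_norml; lra.
Qed.

Lemma L2_psiX_L2 (kmin kmax : R) (h : R -> R) :
  0 < kmin ->
  measurable_fun `]0, L[ kappa ->
  {ae (@lebesgue_measure R), forall x, x \in `]0, L[ -> kmin <= kappa x <= kmax} ->
  L2 L h -> psiX_L2 h.
Proof.
move=> kmin_gt0 mkappa kappa_bnd h_L2; elim=> [|j IHj].
  by under eq_fun do rewrite expr0 mul1r.
under eq_fun do rewrite exprS -mulrA.
apply: L2_mul_bounded IHj; first exact: measurableT_comp (@measurable_ln R) mkappa.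
exact: psi_ae_bounded kappa_bnd.
Qed.

Definition psi_form (n : nat) (g h : R -> R) : R :=
  Rintegral (@lebesgue_measure R) `]0, L[ (fun x => psi kappa x ^+ n * g x * h x).

Lemma aformE j g h : aform L kappa j g h = (j`!%:R)^-1 * psi_form j g h.
Proof. by []. Qed.

Lemma psi_formD i j g h :
  psi_form (i + j) g h = psi_form i g (fun x => psi kappa x ^+ j * h x).
Proof.
by rewrite /psi_form; congr Rintegral; apply/funext => x; rewrite exprD; ring.
Qed.

Variables (du : nat -> R -> R) (m : nat).
Hypothesis du_rec : forall n, (1 <= n <= m)%N -> forall v dv : R -> R, inV L v dv ->
  aform L kappa 0 (du n) dv +
  \sum_(1 <= j < n.+1) aform L kappa j (du (n - j)%N) dv = 0.

Lemma psi_form_rec n h : (1 <= n <= m)%N -> L2 L h ->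
  psi_form 0 (du n) h =
  - \sum_(1 <= j < n.+1) (j`!%:R)^-1 * psi_form j (du (n - j)%N) h.
Proof.
move=> n_range /inV_primitive /(du_rec n_range) /eqP.
by rewrite addr_eq0 aformE fact0 invr1 mul1r => /eqP.
Qed.

Lemma psi_form_du n h : (n <= m)%N -> psiX_L2 h ->
  psi_form 0 (du n) h = expN_coef R n * psi_form n (du 0%N) h.
Proof.
elim/ltn_ind: n h => -[|n] IHn h le_nm h_psiX.
  by rewrite /expN_coef expr0 fact0 divr1 mul1r.
have h_L2 : L2 L h by have := h_psiX 0%N; under eq_fun do rewrite expr0 mul1r.
rewrite psi_form_rec //; apply/eqP; rewrite eqr_oppLR -mulNr.
rewrite -(sum1_inv_fact_expN_coef R (ltn0Sn n)) big_distrl /=; apply/eqP.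
apply: eq_big_nat => j /andP[j_gt0 le_jn]; rewrite -mulrA; congr (_ * _).
have lt_jn : (n.+1 - j < n.+1)%N by rewrite ltn_subrL j_gt0.
have le_jm : (n.+1 - j <= m)%N by exact: leq_trans (leq_subr _ _) le_nm.
rewrite -[j in psi_form j]add0n psi_formD IHn //; last exact: psiX_L2_mul.
by rewrite -psi_formD subnK // -ltnS.
Qed.

End psi_weighted_forms.

Theorem lemma4 (R : realType) (L : R) (kappa : R -> R) (kmin kmax : R)
  (f : R -> R) (beta : R) (m : nat) (u du : nat -> R -> R) :
  0 < L ->
  0 < kmin ->
  measurable_fun `]0, L[ kappa ->
  {ae (@lebesgue_measure R), forall x, x \in `]0, L[ -> kmin <= kappa x <= kmax} ->
  L2 L f ->
  (forall n, (n <= m)%N -> inV L (u n) (du n)) ->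
  (forall v dv : R -> R, inV L v dv ->
     aform L kappa 0 (du 0%N) dv =
     Rintegral (@lebesgue_measure R) `]0, L[ (fun x => f x * v x) - beta * v L) ->
  (forall n, (1 <= n <= m)%N -> forall v dv : R -> R, inV L v dv ->
     aform L kappa 0 (du n) dv +
     \sum_(1 <= j < n.+1) aform L kappa j (du (n - j)%N) dv = 0) ->
  (1 <= m)%N ->
  forall v dv : R -> R, inV L v dv ->
    aform L kappa 0 (du m) dv = (-1) ^+ m * aform L kappa m (du 0%N) dv.
Proof.
move=> _ kmin_gt0 mkappa kappa_bnd _ _ _ du_rec _ v dv [dv_L2 _].
rewrite !aformE fact0 invr1 mul1r (psi_form_du du_rec) //.
  by rewrite /expN_coef mulrA.
exact: L2_psiX_L2 kappa_bnd dv_L2.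
Qed.
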